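(* Let $X\in\mathbb{R}^{n\times p}$, let $\Sigma$ be an $n\times n$ covariance matrix, let $y\in\mathbb{R}^n$, let $\mathcal{K}\subseteq\mathbb{R}^p$ be convex, and let $f_\eta=\eta^TX^Ty$ for $\eta\in\mathcal{K}$. A point $\eta\in\mathcal{K}$ maximizes $f$ over $\mathcal{K}$ if and only if $$\nabla f_{|T_\eta\mathcal{K}}=0,\quad \tilde f^\eta_\eta\ge\mathcal{V}^-_\eta,\quad \tilde f^\eta_\eta\le\mathcal{V}^+_\eta,\quad \mathcal{V}^0_\eta\le0.$$ The same equivalence holds when $\mathcal{K}$ is only locally convex.
   Context: For $\eta\in\mathcal{K}$, let $N_\eta\mathcal{K}$ be the normal cone, $S_\eta\mathcal{K}$ its polar cone (support cone), and $T_\eta\mathcal{K}$ the largest linear subspace contained in $S_\eta\mathcal{K}$ (tangent space), with $V_\eta$ a matrix whose columns form an orthonormal basis of $T_\eta\mathcal{K}$. $\nabla f_{|T_\eta\mathcal{K}}=V_\eta V_\eta^TX^Ty$. Let $P_\eta=\Sigma XV_\eta(V_\eta^TX^T\Sigma XV_\eta)^\dagger V_\eta^TX^T$ ($\dagger$ = pseudoinverse), $\tilde f^\eta_z=(Xz)^T(I-P_\eta)y$ for $z\in\mathcal{K}$, $\sigma^2_\eta=\eta^TX^T(I-P_\eta)\Sigma(I-P_\eta)^TX\eta$ (assumed positive) and $C(\eta)=X^T(I-P_\eta)\Sigma(I-P_\eta)^TX\eta/\sigma^2_\eta$. Define $\mathcal{V}^-_\eta=\max_{z\in\mathcal{K}:\,z^TC(\eta)<1}\frac{\tilde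 f^\eta_z-z^TC(\eta)\tilde f^\eta_\eta}{1-z^TC(\eta)}$, $\mathcal{V}^+_\eta=\min_{z\in\mathcal{K}:\,z^TC(\eta)>1}\frac{\tilde f^\eta_z-z^TC(\eta)\tilde f^\eta_\eta}{1-z^TC(\eta)}$, and $\mathcal{V}^0_\eta=\max_{z\in\mathcal{K}:\,z^TC(\eta)=1}\big(\tilde f^\eta_z-z^TC(\eta)\tilde f^\eta_\eta\big)$, with max over an empty set equal to $-\infty$ and min over an empty set equal to $+\infty$. ''Locally convex'' means the support cone of $\mathcal{K}$ is locally convex everywhere (essentially positive reach). *)

From HB Require Import structures.
From mathcomp Require Import all_boot all_order all_algebra.
From mathcomp Require Import boolp classical_sets reals constructive_ereal ereal.
From Stdlib Require Import ClassicalEpsilon.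

Set Implicit Arguments.
Unset Strict Implicit.
Unset Printing Implicit Defensive.

Import Order.TTheory GRing.Theory Num.Theory.
Local Open Scope ring_scope.
Local Open Scope classical_set_scope.

Section Defs.
Variable R : realType.

Definition dotv n (u v : 'cV[R]_n) : R := (u^T *m v) 0 0.

(* Moore-Penrose pseudoinverse: the (unique) matrix satisfying the four Penrose equations *)
Definition is_mp_pinv m n (A : 'M[R]_(m, n)) (B : 'M[R]_(n, m)) : Prop :=
  [/\ A *m B *m A = A, B *m A *m B = B, (A *m B)^T = A *m B & (B *m A)^T = B *m A].

Definition pinv m n (A : 'M[R]_(m, n)) : 'M[R]_(n, m) :=
  epsilon (inhabits (0 : 'M[R]_(n, m))) (is_mp_pinv A).

Definition covariance_matrix n (S : 'M[R]_n) : Prop :=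
  S^T = S /\ forall u : 'cV[R]_n, 0 <= dotv u (S *m u).

Definition convex_set p (K : set 'cV[R]_p) : Prop :=
  forall x z, K x -> K z -> forall t : R, 0 <= t <= 1 -> K (t *: x + (1 - t) *: z).

Definition cube p (x : 'cV[R]_p) (r : R) : set 'cV[R]_p :=
  [set z | forall i, `|(z - x) i 0| < r].

Definition locally_convex p (K : set 'cV[R]_p) : Prop :=
  forall x, K x -> exists2 r : R, 0 < r & convex_set (K `&` cube x r).

(* Bouligand tangent cone of K at eta *)
Definition tangent_cone p (K : set 'cV[R]_p) (eta : 'cV[R]_p) : set 'cV[R]_p :=
  [set u | forall e d : R, 0 < e -> 0 < d ->
     exists t : R, exists z, [/\ 0 < t < d, K z &
       forall i, `|(t^-1 *: (z - eta) - u) i 0| < e]].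

(* normal cone N_eta K (polar of the tangent cone; the usual normal cone for convex K) *)
Definition normal_cone p (K : set 'cV[R]_p) (eta : 'cV[R]_p) : set 'cV[R]_p :=
  [set v | forall u, tangent_cone K eta u -> dotv v u <= 0].

Definition support_cone p (K : set 'cV[R]_p) (eta : 'cV[R]_p) : set 'cV[R]_p :=
  [set u | forall v, normal_cone K eta v -> dotv u v <= 0].

Definition linear_subspace p (L : set 'cV[R]_p) : Prop :=
  L 0 /\ forall (a : R) u v, L u -> L v -> L (a *: u + v).

(* tangent space T_eta K: largest linear subspace contained in S_eta K
   (the union of all linear subspaces contained in S_eta K) *)
Definition tangent_space p (K : set 'cV[R]_p) (eta : 'cV[R]_p) : set 'cV[R]_p :=
  [set u | exists L, [/\ linear_subspace L, L `<=` support_cone K eta & L u]].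

Definition orthonormal_basis_of p k (V : 'M[R]_(p, k)) (T : set 'cV[R]_p) : Prop :=
  V^T *m V = 1%:M /\ forall u, T u <-> exists c : 'cV[R]_k, u = V *m c.

Variables (n p k : nat) (X : 'M[R]_(n, p)) (Sigma : 'M[R]_n) (y : 'cV[R]_n)
  (V : 'M[R]_(p, k)).

Definition f_obj (z : 'cV[R]_p) : R := dotv z (X^T *m y).

Definition P_mat : 'M[R]_n :=
  Sigma *m X *m V *m pinv (V^T *m X^T *m Sigma *m X *m V) *m V^T *m X^T.

Definition ftilde (z : 'cV[R]_p) : R := dotv (X *m z) ((1%:M - P_mat) *m y).

Definition sigma2 (eta : 'cV[R]_p) : R :=
  dotv eta (X^T *m (1%:M - P_mat) *m Sigma *m (1%:M - P_mat)^T *m X *m eta).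

Definition Cvec (eta : 'cV[R]_p) : 'cV[R]_p :=
  (sigma2 eta)^-1 *: (X^T *m (1%:M - P_mat) *m Sigma *m (1%:M - P_mat)^T *m X *m eta).

Definition Vminus (K : set 'cV[R]_p) (eta : 'cV[R]_p) : \bar R :=
  ereal_sup [set x | exists z, [/\ K z, dotv z (Cvec eta) < 1 &
    x = ((ftilde z - dotv z (Cvec eta) * ftilde eta) / (1 - dotv z (Cvec eta)))%:E]].

Definition Vplus (K : set 'cV[R]_p) (eta : 'cV[R]_p) : \bar R :=
  ereal_inf [set x | exists z, [/\ K z, dotv z (Cvec eta) > 1 &
    x = ((ftilde z - dotv z (Cvec eta) * ftilde eta) / (1 - dotv z (Cvec eta)))%:E]].

Definition V0 (K : set 'cV[R]_p) (eta : 'cV[R]_p) : \bar R :=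
  ereal_sup [set x | exists z, [/\ K z, dotv z (Cvec eta) = 1 &
    x = (ftilde z - dotv z (Cvec eta) * ftilde eta)%:E]].

End Defs.

(* A maximizer eta of the linear function z |-> g^T z
   (g = X^T y) has g in the normal cone at eta, and g is then orthogonal to every
   linear subspace of the support cone, in particular to T_eta K; so V^T g = 0.
   Conversely V V^T g = 0 forces V^T g = 0 since V^T V = I.  Once V^T g = 0 we have
   P_eta y = 0, hence ftilde = f, and the three conditions on V^-, V^+, V^0 are just
   the inequality f z <= f eta rewritten after dividing by 1 - z^T C(eta), split
   according to its sign. *)
From HB Require Import structures.
From mathcomp Require Import all_boot all_order all_algebra.
From mathcomp Require Import boolp classical_sets reals constructive_ereal ereal.
From mathcomp Require Import lra.

Set Implicit Arguments.
Unset Strict Implicit.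
Unset Printing Implicit Defensive.

Import Order.TTheory GRing.Theory Num.Theory.
Local Open Scope ring_scope.
Local Open Scope classical_set_scope.

Section InnerProduct.
Variables (R : realType) (n : nat).
Implicit Types (u v w : 'cV[R]_n).

Lemma dotvE u v : dotv u v = \sum_i u i 0 * v i 0.
Proof. by rewrite /dotv mxE; apply: eq_bigr => i _; rewrite mxE. Qed.

Lemma dotvC u v : dotv u v = dotv v u.
Proof. by rewrite !dotvE; apply: eq_bigr => i _; rewrite mulrC. Qed.

Lemma dotvZr u v a : dotv u (a *: v) = a * dotv u v.
Proof. by rewrite /dotv -scalemxAr mxE. Qed.

Lemma dotvBr u v w : dotv u (v - w) = dotv u v - dotv u w.
Proof. by rewrite /dotv mulmxBr !mxE. Qed.

Lemma dotvNl u v : dotv (- u) v = - dotv u v.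
Proof. by rewrite !dotvE -sumrN; apply: eq_bigr => i _; rewrite mxE mulNr. Qed.

Lemma dotv_le_l1 u v e :
  (forall i, `|v i 0| <= e) -> dotv u v <= (\sum_i `|u i 0|) * e.
Proof.
move=> ve; rewrite dotvE mulr_suml; apply: ler_sum => i _.
by rewrite (le_trans (ler_norm _)) // normrM ler_wpM2l.
Qed.

End InnerProduct.

Section Cones.
Variables (R : realType) (p : nat) (K : set 'cV[R]_p) (eta : 'cV[R]_p).

(* If g^T u > 0 for a tangent direction u, the difference quotients
   (z - eta) / t approximating u to within e = g^T u / (|g|_1 + 1) still have
   positive inner product with g, so some z in K beats eta. *)
Lemma normal_cone_maximizer (g : 'cV[R]_p) :
  (forall z, K z -> dotv g z <= dotv g eta) -> normal_cone K eta g.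
Proof.
move=> gmax u Tu; rewrite leNgt; apply/negP => gu_gt0.
set S := \sum_i `|g i 0|.
have S_ge0 : 0 <= S by apply: sumr_ge0.
set e := dotv g u / (S + 1).
have e_gt0 : 0 < e by apply: divr_gt0 => //; lra.
have Se_lt : S * e < dotv g u.
  by rewrite /e mulrA ltr_pdivrMr; nra.
have [t [z [/andP [t_gt0 _] Kz approx]]] := Tu e 1 e_gt0 ltr01.
set w := t^-1 *: (z - eta).
have gw_le0 : dotv g w <= 0.
  rewrite dotvZr dotvBr pmulr_rle0 ?invr_gt0 // subr_le0.
  exact: gmax.
have gwu : dotv g (u - w) <= S * e.
  by apply: dotv_le_l1 => i; rewrite -opprB mxE normrN ltW // approx.
move: gwu; rewrite dotvBr; lra.
Qed.

Lemma tangent_space_orth_normal_cone (u g : 'cV[R]_p) :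
  tangent_space K eta u -> normal_cone K eta g -> dotv u g = 0.
Proof.
move=> [L [[L0 Llin] LS Lu]] Ng.
have Lnu : L (- u) by have := Llin (-1) _ _ Lu L0; rewrite addr0 scaleN1r.
have := LS _ Lnu g Ng; have := LS _ Lu g Ng; rewrite dotvNl; lra.
Qed.

End Cones.

Section OrthonormalBasis.
Variables (R : realType) (p k : nat) (V : 'M[R]_(p, k)) (T : set 'cV[R]_p).
Hypothesis VT : orthonormal_basis_of V T.

Lemma orthonormal_basis_trmx_eq0 (g : 'cV[R]_p) :
  (forall u, T u -> dotv u g = 0) -> V^T *m g = 0.
Proof.
move=> gT; apply/matrixP => i j; rewrite ord1 !mxE.
have Tcol : T (col i V) by apply/VT.2; exists (delta_mx i 0); rewrite colE.
by rewrite -[RHS](gT _ Tcol) dotvE; apply: eq_bigr => l _; rewrite !mxE.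
Qed.

Lemma orthonormal_basis_proj_eq0 (g : 'cV[R]_p) :
  V *m V^T *m g = 0 <-> V^T *m g = 0.
Proof.
split => [Pg | Vg]; last by rewrite -mulmxA Vg mulmx0.
by rewrite -[V^T *m g]mul1mx -VT.1 -!mulmxA [V *m _]mulmxA Pg mulmx0.
Qed.

End OrthonormalBasis.

Lemma ftilde_f_obj (R : realType) (n p k : nat) (X : 'M[R]_(n, p)) (Sigma : 'M[R]_n)
    (y : 'cV[R]_n) (V : 'M[R]_(p, k)) :
  V^T *m (X^T *m y) = 0 -> ftilde X Sigma y V =1 f_obj X y.
Proof.
move=> Vg z; have Py : P_mat X Sigma V *m y = 0.
  by rewrite /P_mat -!mulmxA (mulmxA V^T) Vg !mulmx0.
by rewrite /ftilde /f_obj mulmxBl mul1mx Py subr0 /dotv trmx_mul -mulmxA.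
Qed.

Section MaximizerBounds.
Variables (R : realType) (T : Type) (K : set T) (F c : T -> R) (x : T).

Let ratio z := (F z - c z * F x) / (1 - c z).

Lemma maximizer_iff_ratio_bounds :
  (forall z, K z -> F z <= F x) <->
  [/\ (ereal_sup [set r | exists z, [/\ K z, (c z < 1)%R & r = (ratio z)%:E]]
         <= (F x)%:E)%E,
      ((F x)%:E
         <= ereal_inf [set r | exists z, [/\ K z, (c z > 1)%R & r = (ratio z)%:E]])%E &
      (ereal_sup [set r | exists z, [/\ K z, c z = 1%R & r = (F z - c z * F x)%R%:E]]
         <= 0)%E].
Proof.
split => [Fmax | [sup_le le_inf sup0_le] z Kz].
  split.
  - apply: ge_ereal_sup => _ [z [Kz cz ->]]; rewrite lee_fin ler_pdivrMr; last lra.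
    have := Fmax z Kz; nra.
  - apply: le_ereal_inf_tmp => _ [z [Kz cz ->]]; rewrite lee_fin ler_ndivlMr; last lra.
    have := Fmax z Kz; nra.
  - apply: ge_ereal_sup => _ [z [Kz cz ->]]; rewrite lee_fin cz.
    have := Fmax z Kz; lra.
case: (ltgtP (c z) 1) => cz.
- have : ((ratio z)%:E <= (F x)%:E)%E.
    by apply: le_trans sup_le; apply: ereal_sup_ubound; exists z.
  rewrite lee_fin ler_pdivrMr; nra.
- have : ((F x)%:E <= (ratio z)%:E)%E.
    by apply: le_trans le_inf _; apply: ereal_inf_lbound; exists z.
  rewrite lee_fin ler_ndivlMr; nra.
- have : ((F z - c z * F x)%:E <= 0)%E.
    by apply: le_trans sup0_le; apply: ereal_sup_ubound; exists z.
  rewrite lee_fin cz; lra.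
Qed.

End MaximizerBounds.

Theorem lemma1 (R : realType) (n p k : nat) (X : 'M[R]_(n, p)) (Sigma : 'M[R]_n)
  (y : 'cV[R]_n) (K : set 'cV[R]_p) (eta : 'cV[R]_p) (V : 'M[R]_(p, k)) :
  covariance_matrix Sigma ->
  (convex_set K \/ locally_convex K) ->
  K eta ->
  orthonormal_basis_of V (tangent_space K eta) ->
  0 < sigma2 X Sigma V eta ->
  (forall z, K z -> f_obj X y z <= f_obj X y eta) <->
  [/\ V *m V^T *m X^T *m y = 0,
      (Vminus X Sigma y V K eta <= (ftilde X Sigma y V eta)%:E)%E,
      ((ftilde X Sigma y V eta)%:E <= Vplus X Sigma y V K eta)%E &
      (V0 X Sigma y V K eta <= 0)%E].
Proof.
move=> _ _ _ VT _.
have bounds := maximizer_iff_ratio_bounds K (ftilde X Sigma y V)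
  (fun z => dotv z (Cvec X Sigma V eta)) eta.
have f_max_iff : V^T *m (X^T *m y) = 0 ->
    (forall z, K z -> f_obj X y z <= f_obj X y eta) <->
    (forall z, K z -> ftilde X Sigma y V z <= ftilde X Sigma y V eta).
  move=> Vg; split => fmax z Kz; have := fmax z Kz;
  by rewrite !(ftilde_f_obj Sigma Vg).
rewrite -mulmxA; split => [fmax | [/(orthonormal_basis_proj_eq0 VT) Vg ? ? ?]].
  have Vg : V^T *m (X^T *m y) = 0.
    apply: (orthonormal_basis_trmx_eq0 VT) => u Tu.
    apply: (tangent_space_orth_normal_cone Tu); apply: normal_cone_maximizer => z Kz.
    by rewrite !(dotvC (X^T *m y)); apply: fmax.
  have [] := bounds.1 ((f_max_iff Vg).1 fmax).
  by split => //; apply/(orthonormal_basis_proj_eq0 VT).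
by apply/(f_max_iff Vg)/bounds.2; split.
Qed.
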